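(* Let $\sigma$ be a nonnegative finite measure on $\mathbb{R}^2$ which is upper $\alpha$-Ahlfors regular for some $\alpha>1$ and constants $M,r_*>0$, with $0<\sigma(\mathbb{R}^2)=\Phi\le Mr_*^\alpha$. Let $X=\frac1\Phi\int_{\mathbb{R}^2}x\,d\sigma(x)$ and $r=\frac1\Phi\int_{\mathbb{R}^2}|x-X|\,d\sigma(x)$. Then $$M^{1/\alpha}r\gtrsim_\alpha\Phi^{1/\alpha}.$$
   Context: For $\alpha\in[0,2]$, a nonnegative finite measure $\sigma$ on $\mathbb{R}^2$ is upper $\alpha$-Ahlfors regular with constants $M,r_*>0$ if $\sigma(B(x,r))\le Mr^\alpha$ for all $x\in\operatorname{supp}\sigma$ and all $r\in(0,r_*]$. $A\gtrsim_\alpha B$ means $A\ge cB$ with $c>0$ depending only on $\alpha$. *)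

(* The plane R^2 is modelled as R * R with the
   product (Borel x Borel) sigma-algebra and the Euclidean distance. *)
From HB Require Import structures.
From mathcomp Require Import all_boot all_order all_algebra.
From mathcomp Require Import all_classical all_reals all_analysis.
Set Implicit Arguments. Unset Strict Implicit. Unset Printing Implicit Defensive.
Import Order.TTheory GRing.Theory Num.Theory.
Local Open Scope classical_set_scope.
Local Open Scope ring_scope.

Definition dist2 {R : realType} (x y : R * R) : R :=
  Num.sqrt ((x.1 - y.1) ^+ 2 + (x.2 - y.2) ^+ 2).

Definition norm2 {R : realType} (x : R * R) : R :=
  Num.sqrt (x.1 ^+ 2 + x.2 ^+ 2).

Definition ball2 {R : realType} (x : R * R) (r : R) : set (R * R) :=
  [set y | dist2 x y < r].

Definition msupp {R : realType} (mu : set (R * R) -> \bar R) : set (R * R) :=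
  [set x | forall e : R, 0 < e -> (0 < mu (ball2 x e))%E].

Definition upper_ahlfors {R : realType} (mu : set (R * R) -> \bar R)
  (alpha M rs : R) : Prop :=
  forall x, msupp mu x -> forall r : R, 0 < r -> r <= rs ->
    (mu (ball2 x r) <= (M * r `^ alpha)%:E)%E.

(* Markov's inequality shows that at most half of the mass of sigma lies at
   distance >= t from X once t > 2r, so the ball B(X, t) carries mass >= Phi/2;
   in particular it meets the support of sigma at some y, and B(X, t) lies in
   B(y, 2t).  Upper regularity at y, extended to radii beyond r_* by the bound
   Phi <= M r_*^alpha, gives Phi <= 2 M (2t)^alpha for every t > 2r, hence
   Phi^(1/alpha) <= 4 (2M)^(1/alpha) r <= 8 M^(1/alpha) r. *)

From HB Require Import structures.
From mathcomp Require Import all_boot all_order all_algebra.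
From mathcomp Require Import all_classical all_reals all_analysis.
From mathcomp Require Import lra measurable_realfun.
Import Order.TTheory GRing.Theory Num.Theory.
Local Open Scope classical_set_scope.
Local Open Scope ring_scope.

Section Euclidean_plane.
Context {R : realType}.
Implicit Types x y z : R * R.

Lemma norm2_ge0 x : 0 <= norm2 x.
Proof. exact: sqrtr_ge0. Qed.

Lemma sqr_norm2 x : norm2 x ^+ 2 = x.1 ^+ 2 + x.2 ^+ 2.
Proof. by rewrite sqr_sqrtr // addr_ge0 // sqr_ge0. Qed.

Lemma norm2N x : norm2 (- x) = norm2 x.
Proof. by rewrite /norm2 /= !sqrrN. Qed.

Lemma dist2E x y : dist2 x y = norm2 (x - y).
Proof. by []. Qed.

Lemma cauchy_schwarz2 x y : x.1 * y.1 + x.2 * y.2 <= norm2 x * norm2 y.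
Proof.
apply: le_trans (ler_norm _) _.
rewrite -[leRHS]ger0_norm ?mulr_ge0 ?norm2_ge0 // -ler_sqr ?nnegrE //.
rewrite !real_normK ?num_real // exprMn !sqr_norm2.
have := sqr_ge0 (x.1 * y.2 - x.2 * y.1); lra.
Qed.

Lemma norm2D x y : norm2 (x + y) <= norm2 x + norm2 y.
Proof.
rewrite -[leRHS]ger0_norm ?addr_ge0 ?norm2_ge0 // -sqrtr_sqr ler_wsqrtr //.
rewrite /= !sqrrD !sqr_norm2.
have := cauchy_schwarz2 x y; lra.
Qed.

Lemma norm2_le_l1 x : norm2 x <= `|x.1| + `|x.2|.
Proof.
rewrite -[leRHS]ger0_norm ?addr_ge0 // -sqrtr_sqr ler_wsqrtr //.
rewrite sqrrD !real_normK ?num_real //.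
have := mulr_ge0 (normr_ge0 x.1) (normr_ge0 x.2); lra.
Qed.

Lemma dist2C x y : dist2 x y = dist2 y x.
Proof. by rewrite !dist2E -norm2N opprB. Qed.

Lemma dist2_triangle x y z : dist2 x z <= dist2 x y + dist2 y z.
Proof. by rewrite !dist2E -[x - z](subrKA y); exact: norm2D. Qed.

Lemma dist2_le_norm2 x y : dist2 x y <= norm2 x + norm2 y.
Proof. by rewrite dist2E -[norm2 y]norm2N; exact: norm2D. Qed.

Lemma subset_ball2 x y r s : dist2 y x + r <= s -> ball2 x r `<=` ball2 y s.
Proof.
move=> yxs z; rewrite /ball2 /= => xz.
by apply: le_lt_trans (dist2_triangle y x z) _; apply: lt_le_trans yxs; rewrite ltrD2l.
Qed.

End Euclidean_plane.

Section measurability.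
Context {R : realType}.

Lemma measurable_dist2 (x : R * R) : measurable_fun setT (dist2 x).
Proof.
apply: (measurableT_comp (continuous_measurable_fun (@sqrt_continuous R))).
by apply: measurable_funD; apply: measurable_funX; apply: measurable_funB.
Qed.

Lemma measurable_dist2r (x : R * R) : measurable_fun setT (dist2^~ x).
Proof.
rewrite (_ : dist2^~ x = dist2 x); first exact: measurable_dist2.
by apply/funext => y; rewrite dist2C.
Qed.

Lemma measurable_ball2 (x : R * R) r : measurable (ball2 x r).
Proof.
have := measurable_dist2 x measurableT _ (measurable_itv `]-oo, r[).
by rewrite setTI; congr measurable; apply/seteqP; split=> y; rewrite /= in_itv.
Qed.

End measurability.

Section negligible_countable.
Context {d} {T : measurableType d} {R : realType} (mu : {measure set T -> \bar R}).

Lemma negligible_bigcup_countable {I : countType} (F : I -> set T) :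
  (forall i, mu.-negligible (F i)) -> mu.-negligible (\bigcup_i F i).
Proof.
move=> F0; pose G n := if unpickle n is Some i then F i else set0.
apply: (negligibleS _ (negligible_bigcup (F := G) _)).
  by move=> y [i _ Fiy]; exists (pickle i) => //; rewrite /G pickleK.
by move=> n; rewrite /G; case: unpickle => [i|]; [exact: F0 | exact: negligible_set0].
Qed.

End negligible_countable.

Section support.
Context {R : realType}.

(* The balls of radius 2/(n+1) centred on the lattice ((n+1)^-1 Z)^2 form a
   countable family fine enough to fit inside any ball around any point, so
   the complement of the support is a countable union of null balls. *)
Definition grid_center (k : int * int * nat) : R * R :=
  (k.1.1%:~R / k.2.+1%:R, k.1.2%:~R / k.2.+1%:R).

Definition grid_ball (k : int * int * nat) : set (R * R) :=
  ball2 (grid_center k) (2 / k.2.+1%:R).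

Lemma floor_div_approx (y N : R) : 0 < N ->
  0 <= y - (Num.floor (y * N))%:~R / N < N^-1.
Proof.
move=> N0; have /andP[ylo yhi] := floor_itv (y * N).
rewrite subr_ge0 ler_pdivrMr // ylo /= ltrBlDl.
by move: yhi; rewrite -ltr_pdivlMr // intrD mulrDl mul1r.
Qed.

Lemma grid_ball_within (y : R * R) (e : R) : 0 < e ->
  exists k, grid_ball k y /\ grid_ball k `<=` ball2 y e.
Proof.
move=> e0; pose n := Num.truncn (4 / e); pose N : R := n.+1%:R.
have N0 : 0 < N by rewrite ltr0n.
have Ne : 4 / N < e.
  by rewrite ltr_pdivrMr // mulrC -ltr_pdivrMr // truncnS_gt.
pose k := (Num.floor (y.1 * N), Num.floor (y.2 * N), n).
have yk : dist2 (grid_center k) y < 2 / N.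
  rewrite dist2C dist2E; apply: le_lt_trans (norm2_le_l1 _) _.
  have /andP[a0 aN] := floor_div_approx y.1 N N0.
  have /andP[b0 bN] := floor_div_approx y.2 N N0.
  rewrite /= !ger0_norm // mulr_natl mulr2n; exact: ltrD.
exists k; split => //; apply: subset_ball2; rewrite dist2C.
apply/ltW/(lt_trans _ Ne); rewrite (_ : 4 / N = 2 / N + 2 / N) ?ltrD2r //.
by rewrite -mulrDl -natrD.
Qed.

Variable mu : {measure set (R * R) -> \bar R}.

Lemma negligible_setC_msupp : mu.-negligible (~` msupp mu).
Proof.
pose F k := [set y | mu (grid_ball k) = 0 /\ grid_ball k y].
apply: (negligibleS _ (negligible_bigcup_countable mu F _)).
  move=> y /= /existsNP[e /not_implyP[e0 /negP]].
  rewrite -leNgt measure_le0 => /eqP mu0.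
  have [k [yk ke]] := grid_ball_within y e e0.
  exists k => //; split => //.
  by apply/eqP; rewrite -measure_le0 -mu0 le_measure // inE; exact: measurable_ball2.
move=> k; have [mu0|mu_neq0] := pselect (mu (grid_ball k) = 0).
  apply: (negligibleS (A := grid_ball k)) => [y []//|].
  by rewrite negligibleP //; exact: measurable_ball2.
rewrite (_ : F k = set0); first exact: negligible_set0.
by apply/seteqP; split => y // [/mu_neq0].
Qed.

Lemma measure_gt0_meets_msupp A :
  measurable A -> (0 < mu A)%E -> exists2 y, A y & msupp mu y.
Proof.
move=> mA; apply: contraPP => /forall2NP noA.
have /negligibleP -> // : mu.-negligible A.
  by apply: negligibleS negligible_setC_msupp => y Ay; case: (noA y).
by rewrite ltxx.
Qed.

End support.

Lemma upper_ahlfors_ball_le {R : realType} (mu : {measure set (R * R) -> \bar R})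
    alpha M rs y u : 0 <= alpha -> 0 <= M -> 0 <= rs ->
  upper_ahlfors mu alpha M rs -> (mu setT <= (M * rs `^ alpha)%:E)%E -> msupp mu y -> 0 < u ->
  (mu (ball2 y u) <= (M * u `^ alpha)%:E)%E.
Proof.
move=> a0 M0 rs0 hup hle ysupp u0; have [urs|rsu] := leP u rs; first exact: hup.
have mu_ball_le : (mu (ball2 y u) <= mu setT)%E.
  by apply: le_measure; rewrite ?inE //; exact: measurable_ball2.
apply: le_trans mu_ball_le (le_trans hle _); rewrite lee_fin ler_wpM2l //.
by apply: ge0_ler_powR; rewrite // ?nnegrE ?ltW // (le_lt_trans rs0).
Qed.

Definition mean_dist {R : realType}
    (sigma : {finite_measure set (R * R)%type -> \bar R}) (X : R * R) : R :=
  (fine (sigma setT))^-1 * Rintegral sigma setT (fun x => dist2 x X).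

Section mean_distance.
Context {R : realType} (sigma : {finite_measure set (R * R)%type -> \bar R}).
Variable X : R * R.
Local Notation Phi := (fine (sigma setT)).
Local Notation far t := [set x : R * R | t <= dist2 x X].

Lemma finite_measureE A : measurable A -> sigma A = (fine (sigma A))%:E.
Proof. by move=> mA; rewrite fineK // fin_num_measure. Qed.

Lemma measurable_far t : measurable (far t).
Proof.
have := measurable_dist2r X measurableT _ (measurable_itv `[t, +oo[).
by rewrite setTI; congr measurable; apply/seteqP; split=> y; rewrite /= in_itv /= andbT.
Qed.

Lemma measure_le_ball_far t : Phi <= fine (sigma (ball2 X t)) + fine (sigma (far t)).
Proof.
have mB := measurable_ball2 X t; have mF := measurable_far t.
rewrite -lee_fin EFinD -!finite_measureE //.
apply: le_trans (measureU2 _ mB mF).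
apply: le_measure; rewrite ?inE //; first exact: measurableU.
by move=> x _; rewrite /ball2 /= dist2C; case: (ltP (dist2 x X) t); [left | right].
Qed.

Lemma mean_dist_ge0 : 0 <= mean_dist sigma X.
Proof.
apply: mulr_ge0; first by rewrite invr_ge0 fine_ge0 ?measure_ge0.
by apply: Rintegral_ge0 => x _; exact: sqrtr_ge0.
Qed.

Hypothesis int_norm2 : sigma.-integrable setT (fun x => (norm2 x)%:E).

Lemma integrable_dist2 : sigma.-integrable setT (fun x => (dist2 x X)%:E).
Proof.
apply: (le_integrable measurableT _ _ (integrableD measurableT int_norm2
  (finite_measure_integrable_cst sigma (norm2 X) measurableT))).
  by apply/measurable_EFinP; exact: measurable_dist2r.
move=> x _ /=; rewrite lee_fin !ger0_norm ?addr_ge0 ?norm2_ge0 //; last exact: sqrtr_ge0.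
exact: dist2_le_norm2.
Qed.

Lemma markov_dist2 t : 0 < t ->
  t * fine (sigma (far t)) <= Rintegral sigma setT (fun x => dist2 x X).
Proof.
move=> t0; rewrite -lee_fin EFinM -finite_measureE; last exact: measurable_far.
rewrite /Rintegral fineK; last exact: integrable_fin_num integrable_dist2.
have := @le_integral_comp_abse _ _ _ sigma setT measurableT (fun x => (dist2 x X)%:E) t
  id (@measurable_id _ _ setT) (fun r h => h) (fun x y _ _ h => h)
  (proj2 (measurable_EFinP _ _) (measurable_dist2r X)) t0.
rewrite setTI (_ : [set x | _] = far t); last first.
  by apply/seteqP; split=> x; rewrite /= lee_fin ger0_norm // sqrtr_ge0.
suff -> : (\int[sigma]_x `|(dist2 x X)%:E| = \int[sigma]_x (dist2 x X)%:E)%E by [].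
by apply: eq_integral => x _; rewrite gee0_abs // lee_fin sqrtr_ge0.
Qed.

Hypothesis sigma_gt0 : (0 < sigma setT)%E.

Lemma total_mass_gt0 : 0 < Phi.
Proof. by rewrite -lte_fin -finite_measureE. Qed.

Lemma half_mass_in_ball t :
  2 * mean_dist sigma X < t -> Phi <= 2 * fine (sigma (ball2 X t)).
Proof.
move=> rt; have Phi0 := total_mass_gt0.
have t0 : 0 < t by apply: le_lt_trans rt; rewrite mulr_ge0 ?mean_dist_ge0.
have far_le : 2 * fine (sigma (far t)) <= Phi.
  rewrite -(ler_pM2l t0); apply: le_trans (_ : Phi * (2 * mean_dist sigma X) <= _).
    have := markov_dist2 t t0; rewrite -[Rintegral _ _ _](mulVKf (lt0r_neq0 Phi0)).
    by rewrite -/(mean_dist _ _); lra.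
  by rewrite [t * _]mulrC; apply: ler_wpM2l; rewrite ltW.
have := measure_le_ball_far t; lra.
Qed.

Lemma total_mass_le_ball alpha M rs t : 0 <= alpha -> 0 <= M -> 0 <= rs ->
  upper_ahlfors sigma alpha M rs -> (sigma setT <= (M * rs `^ alpha)%:E)%E ->
  2 * mean_dist sigma X < t -> Phi <= 2 * M * (2 * t) `^ alpha.
Proof.
move=> a0 M0 rs0 hup hle rt.
have Phi0 := total_mass_gt0; have Phi_le := half_mass_in_ball t rt.
have t0 : 0 < t by apply: le_lt_trans rt; rewrite mulr_ge0 ?mean_dist_ge0.
have mB := measurable_ball2 X t.
have ball_gt0 : (0 < sigma (ball2 X t))%E by rewrite finite_measureE // lte_fin; lra.
have [y Xy ysupp] := measure_gt0_meets_msupp sigma _ mB ball_gt0.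
have ball_le : (sigma (ball2 X t) <= (M * (2 * t) `^ alpha)%:E)%E.
  have t20 : 0 < 2 * t by rewrite mulr_gt0.
  apply: le_trans (upper_ahlfors_ball_le sigma alpha M rs y _ a0 M0 rs0 hup hle ysupp t20).
  apply: le_measure; rewrite ?inE //; first exact: measurable_ball2.
  by apply: subset_ball2; rewrite dist2C; move: Xy; rewrite /ball2 /=; lra.
by move: ball_le; rewrite finite_measureE // lee_fin -mulrA; lra.
Qed.

End mean_distance.

Section root_estimate.
Context {R : realType}.

Lemma powRV_le (a u v : R) :
  0 < a -> 0 <= u -> 0 <= v -> u <= v `^ a -> u `^ a^-1 <= v.
Proof.
move=> a0 u0 v0 uv; rewrite -[leRHS](powRr1 v0) -(mulfV (lt0r_neq0 a0)) powRrM.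
by apply: ge0_ler_powR; rewrite ?invr_ge0 ?nnegrE ?powR_ge0 ?(ltW a0).
Qed.

Lemma root_mass_bound (alpha M Phi r : R) :
  1 <= alpha -> 0 < M -> 0 <= Phi -> 0 <= r ->
  (forall t, 2 * r < t -> Phi <= 2 * M * (2 * t) `^ alpha) ->
  8^-1 * Phi `^ alpha^-1 <= M `^ alpha^-1 * r.
Proof.
move=> a1 M0 Phi0 r0 Phi_le; have a0 : 0 < alpha := lt_le_trans ltr01 a1.
have M2 : 0 < 2 * M by rewrite mulr_gt0.
pose K := (Phi / (2 * M)) `^ alpha^-1.
have K_le : K <= 4 * r.
  apply/ler_addgt0Pr => e e0.
  have := Phi_le ((4 * r + e) / 2) ltac:(lra).
  rewrite [2 * (_ / 2)]mulrC divfK ?pnatr_eq0 // => Phi_le'.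
  apply: powRV_le => //.
  - by rewrite divr_ge0 // ltW.
  - by rewrite addr_ge0 ?mulr_ge0 // ltW.
  - by rewrite ler_pdivrMr // mulrC.
have PhiE : Phi `^ alpha^-1 = 2 `^ alpha^-1 * M `^ alpha^-1 * K.
  rewrite -!powRM ?(ltW M0) ?divr_ge0 ?(ltW M2) //.
  by rewrite mulrC divfK ?lt0r_neq0.
have root2 : 2 `^ alpha^-1 <= 2 by apply: ler1_powR; rewrite ?ler1n // invf_le1.
have mK0 : 0 <= M `^ alpha^-1 * K by rewrite mulr_ge0 ?powR_ge0.
have := ler_wpM2r mK0 root2; have := ler_wpM2l (powR_ge0 M alpha^-1) K_le.
rewrite PhiE -mulrA; lra.
Qed.

End root_estimate.

Theorem corollary4p8 (R : realType) (alpha : R) (halpha : 1 < alpha) :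
  exists2 c : R, 0 < c &
  forall (sigma : {finite_measure set (R * R)%type -> \bar R}) (M rs : R),
    0 < M -> 0 < rs ->
    upper_ahlfors sigma alpha M rs ->
    (0 < sigma setT)%E ->
    (sigma setT <= (M * rs `^ alpha)%:E)%E ->
    sigma.-integrable setT (fun x : R * R => (norm2 x)%:E) ->
    let Phi := fine (sigma setT) in
    let X : R * R := (Phi^-1 * Rintegral sigma setT (fun x => x.1),
                      Phi^-1 * Rintegral sigma setT (fun x => x.2)) in
    let r := Phi^-1 * Rintegral sigma setT (fun x : R * R => dist2 x X) in
    M `^ alpha^-1 * r >= c * Phi `^ alpha^-1.
Proof.
exists 8^-1; first by rewrite invr_gt0.
move=> sigma M rs M0 rs0 hup sigma0 hle int_norm2; cbv zeta.
have a0 : 0 <= alpha by rewrite ltW // (lt_trans ltr01).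
have Phi0 : 0 <= fine (sigma setT) by rewrite fine_ge0 ?measure_ge0.
apply: (root_mass_bound _ _ _ _ (ltW halpha) M0 Phi0 (mean_dist_ge0 sigma _)) => t.
exact: (total_mass_le_ball sigma _ int_norm2 sigma0 alpha M rs t
  a0 (ltW M0) (ltW rs0) hup hle).
Qed.
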